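(* Let $b\in\mathbb{K}_{d,1}$ and $M>0$, and let $t_*$ be as below. There are constants $C_1=C_1(d,\alpha,M)>0$ and $C_2=C_2(d,\alpha,M)>0$ such that for all $a\in(0,M]$, $t\in(0,t_*]$ and $x,y\in\mathbb{R}^d$, $$p^{a,b}(t,x,y)\ge C_1t^{-d/2}\exp\Big(-\frac{C_2|x-y|^2}{t}\Big).$$
   Context: Standing assumption: $d\ge2$, $\alpha\in(0,2)$. $M_b(r)=\sup_x\int_{|x-y|<r}|b(y)||x-y|^{1-d}dy$; $b\in\mathbb{K}_{d,1}$ iff $M_b(r)\to0$ as $r\downarrow0$. $p^a(t,x,y)=p^a(t,x-y)$ with $\int p^a(t,z)e^{iz\cdot\xi}dz=e^{-t(|\xi|^2+a^\alpha|\xi|^\alpha)}$; $p_0^{a,b}=p^a$, $p_k^{a,b}(t,x,y)=\int_0^t\int p_{k-1}^{a,b}(t-s,x,z)b(z)\cdot\nabla_zp^a(s,z,y)dzds$. $q^a_{d,\beta}(t,z)=t^{-d/2}e^{-\beta|z|^2/t}+t^{-d/2}\wedge\frac{a^\alpha t}{|z|^{d+\alpha}}$; $\beta_U>0$ is a constant such that for all $M,T$ there is $C_U>0$ with $p^a\le C_Uq^a_{d,\beta_U}$ on $(0,T]\times\mathbb{R}^d$ for $a\in(0,M]$. $t_*=t_*(d,\alpha,M,b)>0$ and $C_0=C_0(d,\alpha,M)\ge1$ are constants such that for all $a\in(0,M]$, $t\in(0,t_*]$, $x,y$: $\sum_k|p_k^{a,b}(t,x,y)|\le C_0q^a_{d,\beta_U/2}(t,x-y)$,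 and $\sum_kp_k^{a,b}(t,x,y)\ge C_0^{-1}t^{-d/2}$ whenever $|x-y|^2<t$. $p^{a,b}$ is the jointly continuous, nonnegative kernel equal to $\sum_kp_k^{a,b}$ on $(0,t_*]\times\mathbb{R}^d\times\mathbb{R}^d$ and satisfying Chapman–Kolmogorov $p^{a,b}(t+s,x,y)=\int p^{a,b}(t,x,z)p^{a,b}(s,z,y)dz$ for all $t,s>0$. *)

From HB Require Import structures.
From mathcomp Require Import all_boot all_order all_algebra.
From mathcomp Require Import all_classical all_reals all_analysis.
Set Implicit Arguments. Unset Strict Implicit. Unset Printing Implicit Defensive.
Import Order.TTheory GRing.Theory Num.Theory.
Import numFieldNormedType.Exports.
Local Open Scope classical_set_scope.
Local Open Scope ring_scope.

Section Defs.
Variable R : realType.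
Variable d : nat.
Notation V := 'rV[R]_d.

(* Euclidean inner product and norm on R^d (the norm of 'rV is the sup norm) *)
Definition dotp (u v : V) : R := \sum_(i < d) u 0 i * v 0 i.
Definition enorm (u : V) : R := Num.sqrt (dotp u u).

(* Lebesgue integral over R^{n}, written as an iterated one-dimensional
   Lebesgue integral (Fubini/Tonelli); coordinate n-1 is outermost. *)
Fixpoint iint (n : nat) (f : (nat -> R) -> \bar R) : \bar R :=
  match n with
  | 0 => f (fun _ => 0)
  | m.+1 => (\int[@lebesgue_measure R]_(s in [set: R])
               iint m (fun g => f (fun i => if i == m then s else g i)))%E
  end.

Definition vec_of (g : nat -> R) : V := \row_(i < d) g i.

Definition intRd (f : V -> \bar R) : \bar R := iint d (fun g => f (vec_of g)).

Definition grad (f : V -> R) (z : V) : V :=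
  \row_(i < d) ('D_(delta_mx 0 i : V) f z).

Definition Mb (b : V -> V) (r : R) : \bar R :=
  ereal_sup (range (fun x : V =>
    intRd (fun y => if enorm (x - y) < r then
                      (enorm (b y) * powR (enorm (x - y)) (1 - d%:R))%:E
                    else 0%E))).

Definition Kato (b : V -> V) : Prop := Mb b r @[r --> 0^'+] --> 0%E.

(* p^a(t,.) characterized through its Fourier transform:
   \int p^a(t,z) e^{i z.xi} dz = exp(-t(|xi|^2 + a^alpha |xi|^alpha));
   p^a(t,.) is taken continuous and integrable. *)
Definition is_pa (alpha : R) (pa : R -> R -> V -> R) : Prop :=
  forall a t, 0 < a -> 0 < t ->
    continuous (pa a t) /\
    (intRd (fun z => (`| pa a t z |)%:E) < +oo)%E /\
    forall xi : V,
      intRd (fun z => (pa a t z * cos (dotp z xi))%:E)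
        = (expR (- (t * (enorm xi ^+ 2 + powR a alpha * powR (enorm xi) alpha))))%:E
      /\ intRd (fun z => (pa a t z * sin (dotp z xi))%:E) = 0%E.

(* q^a_{d,beta}(t,z) = t^{-d/2} e^{-beta|z|^2/t} + (t^{-d/2} /\ a^alpha t/|z|^{d+alpha});
   at z = 0 the second term is t^{-d/2} (a^alpha t / 0 = +infty). *)
Definition qfun (alpha a beta t : R) (z : V) : R :=
  powR t (- (d%:R / 2)) * expR (- (beta * enorm z ^+ 2 / t)) +
  (if z == 0 then powR t (- (d%:R / 2))
   else Order.min (powR t (- (d%:R / 2)))
                  (powR a alpha * t / powR (enorm z) (d%:R + alpha))).

Fixpoint pk (pa : R -> R -> V -> R) (b : V -> V) (k : nat) (a t : R) (x y : V)
  : R :=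
  match k with
  | 0 => pa a t (x - y)
  | k'.+1 =>
      fine (\int[@lebesgue_measure R]_(s in `]0, t[)
              intRd (fun z => (pk pa b k' a (t - s) x z *
                       dotp (b z) (grad (fun z' => pa a s (z' - y)) z))%:E))
  end.

End Defs.

From HB Require Import structures.
From mathcomp Require Import all_boot all_order all_algebra.
From mathcomp Require Import all_classical all_reals all_analysis.
From mathcomp Require Import ring lra.
Set Implicit Arguments.
Unset Strict Implicit.
Unset Printing Implicit Defensive.
Import Order.TTheory GRing.Theory Num.Theory.
Import numFieldNormedType.Exports.
Local Open Scope classical_set_scope.
Local Open Scope ring_scope.

(* On a time step [tau = (4 d s)^2 <= t_*], the near-diagonal bound gives
   [p(tau, x, y) >= C0^-1 tau^(-d/2)] as soon as every coordinate of [x - y]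
   is at most [3 s].  Applying Chapman-Kolmogorov and integrating only over a
   cube of side [2 s] around a point of the segment from [x] to [y], induction
   on [k] gives [p((k+1) tau, x, y) >= g^(k+1) tau^(-d/2)], with
   [g = C0^-1 / (2 d)^d], whenever the coordinates of [x - y] are at most
   [(k+1) s].  For given [t, x, y] take [N = floor(16 d^2 |x-y|^2 / t) + 1]
   steps of length [tau = t / N]: then [g^N >= g exp(ln g * 16 d^2 |x-y|^2 / t)],
   which is the Gaussian factor. *)

Section nonneg_integralT.
Context {dT : measure_display} {T : measurableType dT} {R : realType}
  (mu : {measure set T -> \bar R}).

(* No measurability is needed: over [setT] the integral of a nonnegative
   function is the supremum of the integrals of the simple functions below it. *)
Lemma ge0_le_integralT (f g : T -> \bar R) :
  (forall x, (0 <= f x)%E) -> (forall x, (f x <= g x)%E) ->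
  (\int[mu]_(x in [set: T]) f x <= \int[mu]_(x in [set: T]) g x)%E.
Proof.
move=> f0 fg.
have g0 x : (0 <= g x)%E by apply: le_trans (f0 x) (fg x).
rewrite !ge0_integralTE//; apply: ereal_sup_le => _ [h hf <-].
by exists h => // x; apply: le_trans (hf x) (fg x).
Qed.

End nonneg_integralT.

Section iterated_integral.
Variable R : realType.

Lemma iint_ge0 n (f : (nat -> R) -> \bar R) :
  (forall g : nat -> R, (0 <= f g)%E) -> (0 <= iint n f)%E.
Proof.
elim: n f => [|n IH] f f0 /=; first exact: f0.
by apply: integral_ge0 => s _; apply: IH => g; apply: f0.
Qed.

Lemma integral_cst_indic_itv (K a b : R) : 0 <= K -> a <= b ->
  (\int[@lebesgue_measure R]_(x in [set: R]) (K * \1_`[a, b] x)%:E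
   = (K * (b - a))%:E)%E.
Proof.
move=> K0 ab; rewrite integralZl_indic//; last first.
  by move=> /lt_le_trans /(_ K0); rewrite ltxx.
rewrite integral_indic//= setIT lebesgue_measure_itv/= lte_fin.
have [ab'|ba] := ltP a b; first by rewrite -EFinD -EFinM.
have -> : b = a by apply/eqP; rewrite eq_le ab ba.
by rewrite subrr mulr0 mule0.
Qed.

Lemma iint_ge_box n (w : nat -> R) (h c : R) (f : (nat -> R) -> \bar R) :
  0 <= c -> 0 <= h -> (forall g : nat -> R, (0 <= f g)%E) ->
  (forall g : nat -> R, (forall i, (i < n)%N -> w i - h <= g i <= w i + h) ->
     (c%:E <= f g)%E) ->
  ((c * (2 * h) ^+ n)%:E <= iint n f)%E.
Proof.
move=> c0 h0; elim: n f => [|n IH] f f0 fc /=.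
  by rewrite expr0 mulr1; apply: fc.
have ch0 : 0 <= c * (2 * h) ^+ n by rewrite mulr_ge0 ?exprn_ge0 ?mulr_ge0.
apply: le_trans (ge0_le_integralT (lebesgue_measure (R:=R))
  (f := fun s => (c * (2 * h) ^+ n * \1_`[w n - h, w n + h] s)%:E)
  (g := fun s => iint n (fun g => f (fun i => if i == n then s else g i))) _ _).
- rewrite integral_cst_indic_itv//; last lra.
  by rewrite exprSr mulrA lee_fin le_eqVlt; apply/orP; left; apply/eqP; ring.
- by move=> s; rewrite lee_fin mulr_ge0.
move=> s; rewrite /indic; case: (boolP (s \in _)) => [|_]; last first.
  by rewrite mulr0; apply: iint_ge0.
rewrite inE /= in_itv /= => hs; rewrite mulr1; apply: IH => // g hg.
apply: fc => i; rewrite ltnS leq_eqVlt => /orP[/eqP->|lti].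
  by rewrite eqxx.
by rewrite ifN ?hg // neq_ltn lti.
Qed.

End iterated_integral.

Section euclidean_norm.
Variables (R : realType) (d : nat).
Implicit Types (v : 'rV[R]_d) (r s : R).

Lemma enorm_sqr v : enorm v ^+ 2 = \sum_(i < d) v 0 i ^+ 2.
Proof.
rewrite /enorm sqr_sqrtr /dotp; last by apply: sumr_ge0 => i _; rewrite -expr2 sqr_ge0.
by apply: eq_bigr => i _; rewrite expr2.
Qed.

Lemma enorm_ge0 v : 0 <= enorm v.
Proof. exact: sqrtr_ge0. Qed.

Lemma coord_le_enorm v i : `|v 0 i| <= enorm v.
Proof.
rewrite -(@ler_pXn2r _ 2) ?nnegrE ?enorm_ge0// real_normK ?num_real //.
rewrite enorm_sqr (bigD1 i) //= lerDl.
by apply: sumr_ge0 => j _; apply: sqr_ge0.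
Qed.

Lemma enorm_sqr_le_box v r : (forall i, `|v 0 i| <= r) ->
  enorm v ^+ 2 <= d%:R * r ^+ 2.
Proof.
move=> vr; rewrite enorm_sqr.
have -> : d%:R * r ^+ 2 = \sum_(i < d) r ^+ 2 by rewrite sumr_const card_ord mulr_natl.
apply: ler_sum => i _; have := vr i; rewrite ler_norml => /andP[? ?]; nra.
Qed.

Lemma enorm_sqr_lt_box v s : (0 < d)%N -> 0 < s ->
  (forall i, `|v 0 i| <= 3 * s) -> enorm v ^+ 2 < (4 * d%:R * s) ^+ 2.
Proof.
move=> d_gt0 s_gt0 /enorm_sqr_le_box vs; apply: le_lt_trans vs _.
have d1 : 1 <= d%:R :> R by rewrite ler1n.
have ds : 0 < d%:R * s ^+ 2 by rewrite mulr_gt0 ?exprn_gt0//; lra.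
nra.
Qed.

End euclidean_norm.

Lemma powR_sqr_Nhalf (R : realType) (d : nat) (u : R) : 0 < u ->
  powR (u ^+ 2) (- (d%:R / 2)) = (u ^+ d)^-1.
Proof.
move=> u0; rewrite -(powR_mulrn 2 (ltW u0)) -powRrM.
have -> : 2%:R * - (d%:R / 2) = - d%:R :> R by field.
by rewrite powRN powR_mulrn // ltW.
Qed.

Lemma expR_lnM_le_expr_truncn (R : realType) (g X : R) : 0 < g <= 1 -> 0 <= X ->
  expR (ln g * X) <= g ^+ Num.truncn X.
Proof.
move=> /andP[g0 g1] X0.
rewrite -{2}(lnK (g0 : g \in Num.pos)) -expRM_natl ler_expR mulrC.
by apply: ler_wnM2r; [exact: ln_le0 | rewrite truncn_le].
Qed.

Lemma chain_link_bounds (R : realFieldType) (k : nat) (a b e s : R) :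
  `|a - b| <= k.+2%:R * s ->
  `|e - (a + k%:R * ((b - a) / k.+2%:R))| <= s ->
  `|a - e| <= k.+1%:R * s /\ `|e - b| <= 3 * s.
Proof.
have k2 : 0 < k.+2%:R :> R by rewrite ltr0n.
set del := (b - a) / k.+2%:R => hab hea.
have ba : b - a = k.+2%:R * del by rewrite /del mulrC divfK ?gt_eqF.
have : `|del| <= s.
  by rewrite -(ler_pM2l k2) -[X in X * `|_|]gtr0_norm// -normrM -ba distrC.
have k0 : 0 <= k%:R :> R by rewrite ler0n.
rewrite -[k.+2]addn2 -[k.+1]addn1 !natrD in ba *.
move: hea; rewrite !ler_norml => /andP[h1 h2] /andP[h3 h4].
split; apply/andP; split; nra.
Qed.

Section chapman_kolmogorov_chain.
Variables (R : realType) (d : nat) (C0 tstar : R).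
Variable p : R -> 'rV[R]_d -> 'rV[R]_d -> R.
Hypotheses (d_gt0 : (0 < d)%N) (C0_ge1 : 1 <= C0).
Hypothesis p_ge0 : forall (t : R) x y, 0 < t -> 0 <= p t x y.
Hypothesis p_near_diag : forall (t : R) x y, 0 < t <= tstar ->
  enorm (x - y) ^+ 2 < t -> C0^-1 * powR t (- (d%:R / 2)) <= p t x y.
Hypothesis p_chapman_kolmogorov : forall (t s : R) x y, 0 < t -> 0 < s ->
  (p (t + s) x y)%:E = intRd (fun z => (p t x z * p s z y)%:E).

Local Notation gam := (C0^-1 / (2 * d%:R) ^+ d).

Let C0_gt0 : 0 < C0. Proof. exact: lt_le_trans ltr01 C0_ge1. Qed.

Let box_const_gt1 : 1 < (2 * d%:R) ^+ d :> R.
Proof.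
have d1 : 1 <= d%:R :> R by rewrite ler1n.
by rewrite exprn_egt1 -?lt0n//; lra.
Qed.

Lemma chain_const_gt0 : 0 < gam.
Proof.
by rewrite divr_gt0 ?invr_gt0 ?(lt_trans ltr01 box_const_gt1) ?C0_gt0.
Qed.

Lemma chain_const_le : gam <= C0^-1.
Proof.
have A1 := box_const_gt1.
by rewrite ler_pdivrMr ?(lt_trans ltr01 A1)// ler_peMr ?ltW// invr_gt0.
Qed.

Lemma chain_const_lt1 : gam < 1.
Proof.
have A1 := box_const_gt1.
rewrite ltr_pdivrMr ?(lt_trans ltr01 A1)// mul1r (le_lt_trans _ A1)//.
by rewrite invf_le1.
Qed.

Lemma powR_box (s : R) : 0 < s -> powR ((4 * d%:R * s) ^+ 2) (- (d%:R / 2))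
  = ((2 * d%:R) ^+ d * (2 * s) ^+ d)^-1.
Proof.
have d0 : 0 < d%:R :> R by rewrite ltr0n.
move=> s0; rewrite powR_sqr_Nhalf -?exprMn; last by rewrite !mulr_gt0.
by congr (_ ^+ _)^-1; ring.
Qed.

Lemma p_chain_lb k (s : R) (x y : 'rV[R]_d) : 0 < s -> (4 * d%:R * s) ^+ 2 <= tstar ->
  (forall i, `|x 0 i - y 0 i| <= k.+1%:R * s) ->
  gam ^+ k.+1 * powR ((4 * d%:R * s) ^+ 2) (- (d%:R / 2))
    <= p (k.+1%:R * (4 * d%:R * s) ^+ 2) x y.
Proof.
move=> s0; set tau := (4 * d%:R * s) ^+ 2 => tau_le.
have tau0 : 0 < tau by rewrite exprn_gt0// !mulr_gt0// ltr0n.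
set P := powR tau _; have P0 : 0 <= P by apply: powR_ge0.
have near (x' y' : 'rV[R]_d) : (forall i, `|x' 0 i - y' 0 i| <= 3 * s) ->
    C0^-1 * P <= p tau x' y'.
  move=> h; apply: p_near_diag; first by rewrite tau0.
  by apply: enorm_sqr_lt_box => // i; rewrite !mxE.
elim: k x y => [|k IH] x y hxy.
  rewrite mul1r expr1; apply: le_trans (near _ _ _).
    by rewrite ler_wpM2r// chain_const_le.
  by move=> i; apply: le_trans (hxy i) _; rewrite mul1r; lra.
have -> : k.+2%:R * tau = k.+1%:R * tau + tau.
  by rewrite -[k.+2]addn1 natrD mulrDl mul1r.
rewrite -lee_fin p_chapman_kolmogorov ?mulr_gt0 ?ltr0n//.
pose i0 : 'I_d := Ordinal d_gt0.
(* Integrate only over the cube of side [2 s] centred at [w], the point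
   [k / (k + 2)] of the way from [x] to [y]. *)
pose w j := let i := insubd i0 j in x 0 i + k%:R * ((y 0 i - x 0 i) / k.+2%:R).
pose c := gam ^+ k.+1 * P * (C0^-1 * P).
have gam0 := chain_const_gt0.
have c0 : 0 <= c.
  by rewrite /c !mulr_ge0 ?exprn_ge0 ?invr_ge0 ?(ltW gam0) ?(ltW C0_gt0).
apply: le_trans (@iint_ge_box _ _ w s c _ c0 (ltW s0) _ _).
- rewrite /c /P powR_box// exprS lee_fin le_eqVlt; apply/orP; left.
  apply/eqP; move: (gam ^+ k.+1) => G; field.
  by rewrite !expf_neq0 ?mulf_neq0 ?pnatr_eq0 -?lt0n ?gt_eqF//; lra.
- by move=> g; rewrite lee_fin mulr_ge0// p_ge0 ?mulr_gt0 ?ltr0n.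
move=> g hg; rewrite lee_fin /c.
have links i : `|x 0 i - vec_of d g 0 i| <= k.+1%:R * s /\
               `|vec_of d g 0 i - y 0 i| <= 3 * s.
  apply: chain_link_bounds (hxy i) _; rewrite mxE ler_norml.
  have := hg i (ltn_ord i); rewrite /w /= valKd => /andP[h1 h2].
  set A := x 0 i + _ in h1 h2 *.
  by apply/andP; split; lra.
apply: ler_pM; rewrite ?mulr_ge0 ?exprn_ge0 ?invr_ge0 ?(ltW gam0) ?(ltW C0_gt0)//.
- by apply: IH => i; case: (links i).
- by apply: near => i; case: (links i).
Qed.

Lemma p_gaussian_lb (t : R) (x y : 'rV[R]_d) : 0 < t <= tstar ->
  gam * powR t (- (d%:R / 2))
      * expR (- (- ln gam * (16 * d%:R ^+ 2) * enorm (x - y) ^+ 2 / t))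
    <= p t x y.
Proof.
move=> /andP[t0 t_le]; have d0 : 0 < d%:R :> R by rewrite ltr0n.
have gam0 := chain_const_gt0.
set r := enorm (x - y); set X := 16 * d%:R ^+ 2 * r ^+ 2 / t.
have h16 : 0 < 16 * d%:R ^+ 2 :> R by rewrite mulr_gt0 ?exprn_gt0.
have X0 : 0 <= X by apply: divr_ge0 (ltW t0); apply: mulr_ge0 (ltW h16) (sqr_ge0 _).
set m := Num.truncn X; set N := m.+1%:R : R.
have N1 : 1 <= N by rewrite ler1n.
have N0 : 0 < N by rewrite ltr0n.
have XN : X < N by apply: truncnS_gt.
set tau := t / N; set s := Num.sqrt tau / (4 * d%:R).
have tau0 : 0 < tau by rewrite divr_gt0.
have s0 : 0 < s by rewrite divr_gt0 ?sqrtr_gt0 // mulr_gt0.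
have taus : (4 * d%:R * s) ^+ 2 = tau.
  by rewrite /s mulrC divfK ?sqr_sqrtr ?ltW ?mulf_neq0 ?gt_eqF.
have Nt : N * tau = t by rewrite /tau mulrC divfK ?gt_eqF.
have tau_le_t : tau <= t by rewrite -[X in _ <= X]Nt; apply: ler_peMl (ltW tau0) N1.
have rNs : r ^+ 2 <= (N * s) ^+ 2.
  rewrite -(ler_pM2r h16).
  have -> : (N * s) ^+ 2 * (16 * d%:R ^+ 2) = N * t by rewrite -Nt -taus; ring.
  have -> : r ^+ 2 * (16 * d%:R ^+ 2) = X * t by rewrite /X; field; lra.
  by rewrite ler_pM2r // ltW.
have coord i : `|x 0 i - y 0 i| <= N * s.
  have := coord_le_enorm (x - y) i; rewrite !mxE => /le_trans; apply.
  by rewrite -(@ler_pXn2r _ 2) ?nnegrE ?enorm_ge0 ?mulr_ge0 ?(ltW s0) ?(ltW N0).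
have := p_chain_lb s0 (ltac:(by rewrite taus; lra)) coord.
rewrite taus Nt; apply: le_trans.
have -> : - (- ln gam * (16 * d%:R ^+ 2) * r ^+ 2 / t) = ln gam * X.
  by rewrite /X; field; lra.
rewrite mulrAC exprS; apply: ler_pM.
- exact: mulr_ge0 (ltW gam0) (expR_ge0 _).
- exact: powR_ge0.
- rewrite ler_pM2l//; apply: expR_lnM_le_expr_truncn X0.
  by rewrite gam0 (ltW chain_const_lt1).
rewrite !powRN lef_pV2 ?posrE ?powR_gt0//.
apply: ge0_ler_powR tau_le_t; first by rewrite divr_ge0 ?ler0n.
  by rewrite nnegrE ltW.
by rewrite nnegrE ltW.
Qed.

End chapman_kolmogorov_chain.

Theorem lemma5p7 (R : realType) (d : nat) (alpha M : R)
    (pa : R -> R -> 'rV[R]_d -> R) (betaU C0 : R) :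
  (2 <= d)%N -> 0 < alpha < 2 -> 0 < M ->
  is_pa alpha pa ->
  0 < betaU ->
  (forall M' T : R, 0 < M' -> 0 < T -> exists CU : R, 0 < CU /\
     forall a t (z : 'rV[R]_d), 0 < a <= M' -> 0 < t <= T ->
       pa a t z <= CU * qfun alpha a betaU t z) ->
  1 <= C0 ->
  exists C1 C2 : R, 0 < C1 /\ 0 < C2 /\
  forall (b : 'rV[R]_d -> 'rV[R]_d) (tstar : R)
         (pab : R -> R -> 'rV[R]_d -> 'rV[R]_d -> R),
    Kato b ->
    0 < tstar ->
    (* defining properties of t_* and C_0 *)
    (forall a t (x y : 'rV[R]_d), 0 < a <= M -> 0 < t <= tstar ->
       (forall n, \sum_(k < n) `| pk pa b k a t x y |
                    <= C0 * qfun alpha a (betaU / 2) t (x - y)) /\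
       (enorm (x - y) ^+ 2 < t ->
          C0^-1 * powR t (- (d%:R / 2))
            <= limn (fun n => \sum_(k < n) pk pa b k a t x y))) ->
    (* defining properties of p^{a,b} *)
    (forall a, 0 < a <= M ->
       (forall t (x y : 'rV[R]_d), 0 < t ->
          {for (t, (x, y)), continuous
             (fun p : R * ('rV[R]_d * 'rV[R]_d) => pab a p.1 p.2.1 p.2.2)}) /\
       (forall t (x y : 'rV[R]_d), 0 < t -> 0 <= pab a t x y) /\
       (forall t (x y : 'rV[R]_d), 0 < t <= tstar ->
          (fun n => \sum_(k < n) pk pa b k a t x y) @ \oo --> pab a t x y) /\
       (forall t s (x y : 'rV[R]_d), 0 < t -> 0 < s ->
          (pab a (t + s) x y)%:E
            = intRd (fun z => (pab a t x z * pab a s z y)%:E))) ->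
    forall a t (x y : 'rV[R]_d), 0 < a <= M -> 0 < t <= tstar ->
      C1 * powR t (- (d%:R / 2)) * expR (- (C2 * enorm (x - y) ^+ 2 / t))
        <= pab a t x y.
Proof.
move=> d_ge2 _ _ _ _ _ C0_ge1.
have d_gt0 : (0 < d)%N by apply: leq_trans d_ge2.
have gam0 := chain_const_gt0 d_gt0 C0_ge1.
exists (C0^-1 / (2 * d%:R) ^+ d), (- ln (C0^-1 / (2 * d%:R) ^+ d) * (16 * d%:R ^+ 2)).
split=> //; split.
  apply: mulr_gt0; last by rewrite mulr_gt0 ?exprn_gt0 ?ltr0n.
  by rewrite oppr_gt0 ln_lt0// gam0 chain_const_lt1.
move=> b tstar pab _ _ pk_props pab_props a t x y aM tt.
have [_ [pab_ge0 [pab_lim pab_CK]]] := pab_props a aM.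
apply: (p_gaussian_lb d_gt0 C0_ge1 pab_ge0 _ pab_CK x y tt).
move=> s x' y' st xy'; have [_ pk_diag] := pk_props a s x' y' aM st.
by rewrite -(cvg_lim (@Rhausdorff R) (pab_lim _ _ _ st)); apply: pk_diag.
Qed.
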